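(* For every $\delta>0$ there is $\kappa>0$ with the following property. Let $\varepsilon\in(0,1)$, let $a,b\in\mathbb{R}^d$ with $a\ne b$, and let $P_{ab}$ be a monotone polygonal $ab$-path. For $\alpha\in[0,\pi/2]$ let $F(\alpha)$ be the set of edges $e$ of $P_{ab}$ with $\angle(ab,e)\ge\alpha$, and $\|F(\alpha)\|$ their total length. If $\|F(i\sqrt{\varepsilon\kappa})\|\le\|P_{ab}\|/i^{2+\delta}$ for all integers $i\in\{1,\dots,\lceil(\pi/2)/\sqrt{\varepsilon\kappa}\rceil\}$, then $\|P_{ab}\|\le(1+\varepsilon)\|ab\|$.
   Context: An $ab$-path $(v_0=a,v_1,\dots,v_m=b)$ is monotone if $(v_i-v_{i-1})\cdot(b-a)\ge 0$ for all $i$ (equivalently, it crosses every hyperplane orthogonal to $ab$ at most once). For undirected segments $e_1,e_2$ with unit direction vectors $\pm\vec u_1,\pm\vec u_2$, $\angle(e_1,e_2)=\arccos|\vec u_1\cdot\vec u_2|$. *)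

From mathcomp Require Import all_boot all_order all_algebra.
From mathcomp Require Import all_classical all_reals all_analysis.
Set Implicit Arguments. Unset Strict Implicit. Unset Printing Implicit Defensive.
Import Order.TTheory GRing.Theory Num.Theory.
Local Open Scope ring_scope.

Section Defs.
Variables (R : realType) (d : nat).
Implicit Types (u v a b : 'rV[R]_d).

Definition dotp u v : R := \sum_(i < d) u 0 i * v 0 i.
Definition enorm u : R := Num.sqrt (dotp u u).

(* A polygonal path is given by its starting vertex a and the list s of
   the remaining vertices (v_1,...,v_m); its edges are the consecutive pairs. *)
Definition edges a (s : seq 'rV[R]_d) : seq ('rV[R]_d * 'rV[R]_d) :=
  zip (belast a s) s.

Definition seglen (e : 'rV[R]_d * 'rV[R]_d) : R := enorm (e.2 - e.1).

Definition is_path a b (s : seq 'rV[R]_d) : Prop := last a s = b.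

Definition monotone_path a b (s : seq 'rV[R]_d) : Prop :=
  is_path a b s /\ all (fun e => 0 <= dotp (e.2 - e.1) (b - a)) (edges a s).

(* angle between undirected segments: arccos |u1 . u2| with unit directions *)
Definition seg_angle (e1 e2 : 'rV[R]_d * 'rV[R]_d) : R :=
  let w1 := e1.2 - e1.1 in let w2 := e2.2 - e2.1 in
  acos (`|dotp w1 w2| / (enorm w1 * enorm w2)).

Definition path_len a (s : seq 'rV[R]_d) : R :=
  \sum_(e <- edges a s) seglen e.

Definition F_len a b (s : seq 'rV[R]_d) (alpha : R) : R :=
  \sum_(e <- edges a s | alpha <= seg_angle (a, b) e) seglen e.

End Defs.

From mathcomp Require Import all_boot all_order all_algebra.
From mathcomp Require Import all_classical all_reals all_analysis.
From mathcomp Require Import ring lra zify.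
Import Order.TTheory GRing.Theory Num.Theory.
Import numFieldNormedType.Exports.
Local Open Scope ring_scope.
Set Implicit Arguments. Unset Strict Implicit.

(* Write [l_e] and [θ_e] for the length of an edge and its angle with [ab].
   Monotonicity makes [l_e cos θ_e] the length of the projection of [e] onto
   [ab], so these projections add up to [|ab|] and
   [|P| - |ab| = Σ l_e (1 - cos θ_e) <= Σ l_e θ_e^2].  Cutting the angles at
   the multiples [j t] of [t = sqrt (ε κ)] gives
   [θ_e^2 <= t^2 (1 + Σ_{j t <= θ_e} (2j + 1))]; exchanging the sums turns
   [Σ l_e θ_e^2] into at most [t^2 (|P| + Σ_j (2j + 1) ||F(j t)||)], and the
   hypothesis bounds the last sum by [3 |P| Σ_j j^-(1+δ) <= 3 (1 + 1/δ) |P|].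
   With [κ = 1 / (2 (4 + 3/δ))] this yields [|P| - |ab| <= ε/2 |P|]. *)

Section DotProduct.
Variables (R : realType) (d : nat).
Implicit Types (u v w : 'rV[R]_d).

Lemma dotpC u v : dotp u v = dotp v u.
Proof. by apply: eq_bigr => i _; rewrite mulrC. Qed.

Lemma dotpDl u v w : dotp (u + v) w = dotp u w + dotp v w.
Proof. by rewrite /dotp -big_split; apply: eq_bigr => i _; rewrite !mxE mulrDl. Qed.

Lemma dotpNl u w : dotp (- u) w = - dotp u w.
Proof. by rewrite /dotp -sumrN; apply: eq_bigr => i _; rewrite !mxE mulNr. Qed.

Lemma dotpBl u v w : dotp (u - v) w = dotp u w - dotp v w.
Proof. by rewrite dotpDl dotpNl. Qed.

Lemma dotpZl (k : R) u w : dotp (k *: u) w = k * dotp u w.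
Proof. by rewrite /dotp mulr_sumr; apply: eq_bigr => i _; rewrite !mxE mulrA. Qed.

Lemma dotp0r u : dotp u 0 = 0.
Proof. by rewrite /dotp big1 // => i _; rewrite mxE mulr0. Qed.

Lemma dotpp_ge0 u : 0 <= dotp u u.
Proof. by rewrite sumr_ge0 // => i _; rewrite -expr2 sqr_ge0. Qed.

Lemma dotpp_eq0 u : (dotp u u == 0) = (u == 0).
Proof.
apply/idP/eqP => [|->]; last by rewrite dotp0r.
rewrite psumr_eq0 => [/allP uu0|i _]; last by rewrite -expr2 sqr_ge0.
apply/rowP => i; rewrite mxE.
by have /eqP/eqP := uu0 i (mem_index_enum _); rewrite mulf_eq0 orbb => /eqP.
Qed.

Lemma sqr_dotp_le u v : dotp u v ^+ 2 <= dotp u u * dotp v v.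
Proof.
have [->|v0] := eqVneq v 0; first by rewrite !dotp0r expr0n mulr0.
have vv0 : 0 < dotp v v by rewrite lt_def dotpp_eq0 v0 dotpp_ge0.
set A := dotp u u; set B := dotp v v; set C := dotp u v.
(* expand [0 <= |B u - C v|^2 = B (A B - C^2)] *)
have := dotpp_ge0 (B *: u - C *: v).
rewrite !dotpBl !(dotpC _ (B *: u - C *: v)) !dotpBl !dotpZl.
rewrite !(dotpC _ (_ *: _)) !dotpZl -/A -/B -/C (dotpC v u) -/C => h.
have : 0 <= B * (A * B - C ^+ 2) by nra.
by rewrite pmulr_rge0 // subr_ge0.
Qed.

Lemma enorm_ge0 u : 0 <= enorm u.
Proof. exact: sqrtr_ge0. Qed.

Lemma enorm_gt0 u : u != 0 -> 0 < enorm u.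
Proof. by move=> u0; rewrite sqrtr_gt0 lt_def dotpp_eq0 u0 dotpp_ge0. Qed.

Lemma sqr_enorm u : enorm u ^+ 2 = dotp u u.
Proof. by rewrite sqr_sqrtr ?dotpp_ge0. Qed.

Lemma normr_dotp_le u v : `|dotp u v| <= enorm u * enorm v.
Proof.
rewrite -sqrtrM ?dotpp_ge0 // -(sqrtr_sqr (dotp u v)).
by rewrite ler_sqrt ?sqr_dotp_le // mulr_ge0 ?dotpp_ge0.
Qed.

Lemma normr_dotp_div_itv u v : 0 <= `|dotp u v| / (enorm u * enorm v) <= 1.
Proof.
rewrite divr_ge0 ?mulr_ge0 ?enorm_ge0 //=.
have [->|n0] := eqVneq (enorm u * enorm v) 0; first by rewrite invr0 mulr0.
have np : 0 < enorm u * enorm v by rewrite lt_def n0 mulr_ge0 ?enorm_ge0.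
by rewrite ler_pdivrMr // mul1r normr_dotp_le.
Qed.

End DotProduct.

Section Angles.
Variables (R : realType) (d : nat).
Implicit Types (e : 'rV[R]_d * 'rV[R]_d).

Lemma acos_le_pihalf (x : R) : 0 <= x <= 1 -> acos x <= pi / 2.
Proof.
move=> /andP[x0 x1]; have x11 : -1 <= x <= 1 by apply/andP; split => //; lra.
rewrite leNgt; apply/negP => /[dup] xlt.
have pi2 : pi / 2 \in `[0, pi :> R].
  by rewrite in_itv /= divr_ge0 ?pi_ge0 //= ler_pdivrMr // ler_peMr ?pi_ge0 ?ler1n.
have ax : acos x \in `[0, pi] by rewrite in_itv /= acos_ge0 // acos_lepi.
rewrite -(ltr_cos pi2 ax) cos_pihalf acosK ?in_itv //=.
by rewrite ltNge x0.
Qed.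

Lemma seg_angle_ge0 e1 e2 : 0 <= seg_angle e1 e2.
Proof.
have /andP[c0 c1] := normr_dotp_div_itv (e1.2 - e1.1) (e2.2 - e2.1).
by rewrite acos_ge0 //; apply/andP; split => //; lra.
Qed.

Lemma seg_angle_le_pihalf e1 e2 : seg_angle e1 e2 <= pi / 2.
Proof. exact/acos_le_pihalf/normr_dotp_div_itv. Qed.

Lemma seglen_cos_seg_angle e1 e2 :
  seglen e1 * seglen e2 * cos (seg_angle e1 e2)
  = `|dotp (e1.2 - e1.1) (e2.2 - e2.1)|.
Proof.
have /andP[c0 c1] := normr_dotp_div_itv (e1.2 - e1.1) (e2.2 - e2.1).
rewrite /seg_angle /seglen acosK ?in_itv /=; last by apply/andP; split => //; lra.
set w1 := e1.2 - e1.1; set w2 := e2.2 - e2.1.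
have [n0|n0] := eqVneq (enorm w1 * enorm w2) 0.
  have := normr_dotp_le w1 w2; rewrite n0 normr_le0 => /eqP ->.
  by rewrite mul0r normr0.
by rewrite mulrCA mulfV // mulr1.
Qed.

End Angles.

Section Calculus.
Variable R : realType.

Lemma sin_le (x : R) : 0 <= x -> sin x <= x.
Proof.
move=> x0.
have [|c _ h] := @MVT_segment _ sin cos _ _ x0 (fun y _ => is_derive_sin y).
  exact/continuous_subspaceT/continuous_sin.
move: h; rewrite sin0 !subr0 => ->.
by rewrite -[leRHS]mul1r ler_wpM2r ?cos_le1.
Qed.

Lemma one_sub_cos_le_sqr (x : R) : 0 <= x -> 1 - cos x <= x ^+ 2.
Proof.
move=> x0.
have [|c /andP[c0 cx] h] :=
  @MVT_segment _ cos (fun y => - sin y) _ _ x0 (fun y _ => is_derive_cos y).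
  exact/continuous_subspaceT/continuous_cos.
rewrite bnd_simp in c0 cx.
have -> : 1 - cos x = sin c * x by rewrite -cos0 -opprB h subr0 mulNr opprK.
by rewrite expr2 ler_wpM2r // (le_trans (sin_le c0)).
Qed.

(* Mean value theorem for [y |-> y^-δ] on [[a, a + 1]]. *)
Lemma inv_powR_succ_le (de a : R) : 0 < de -> 0 < a ->
  ((a + 1) `^ (1 + de))^-1 <= de^-1 * ((a `^ de)^-1 - ((a + 1) `^ de)^-1).
Proof.
move=> de0 a0; have aa1 : a <= a + 1 by lra.
have [| |c /andP[c0 c1] h] := @MVT_segment _ (fun x : R => x `^ (- de))
    (fun x : R => - de * x `^ (- de - 1)) _ _ aa1.
- move=> x; rewrite in_itv /= => /andP[ax _].
  exact: is_derive1_powR (lt_trans a0 ax).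
- apply/continuous_in_subspaceT => x; rewrite inE /= in_itv /= => /andP[ax _].
  apply/differentiable_continuous/derivable1_diffP.
  by apply: derivable_powR; rewrite in_itv /= andbT (lt_le_trans a0 ax).
rewrite !bnd_simp in c0 c1; rewrite !powRN in h.
have -> : (a `^ de)^-1 - ((a + 1) `^ de)^-1 = de * c `^ (- de - 1).
  by rewrite -opprB h addrAC subrr add0r mulr1 mulNr opprK.
rewrite mulrA mulVf ?gt_eqF // mul1r (_ : - de - 1 = - (1 + de)); last by ring.
have c_gt0 : 0 < c := lt_le_trans a0 c0.
rewrite powRN lef_pV2 ?posrE ?powR_gt0 ?addr_gt0 //.
by apply: ge0_ler_powR; rewrite ?nnegrE; lra.
Qed.

Lemma sum_inv_powR_le (de : R) n : 0 < de ->
  \sum_(1 <= j < n.+1) ((j%:R : R) `^ (1 + de))^-1 <= 1 + de^-1.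
Proof.
move=> de0; case: n => [|n]; first by rewrite big_geq // addr_ge0 ?invr_ge0 ?ltW.
set g := fun j : nat => ((j%:R : R) `^ de)^-1.
rewrite big_ltn // powR1 invr1 lerD2l big_add1 /=.
apply: (@le_trans _ _ (\sum_(1 <= j < n.+1) de^-1 * (g j - g j.+1))).
  apply: ler_sum_nat => j /andP[j1 _].
  by rewrite /g -natr1 inv_powR_succ_le // ltr0n.
rewrite -mulr_sumr ger_pMr ?invr_gt0 //.
rewrite (@telescope_sumr_eq _ _ _ (fun j => - g j)) => [|//|j _]; last by ring.
have g1 : g 1%N = 1 by rewrite /g powR1 invr1.
have : 0 <= g n.+1 by rewrite invr_ge0 powR_ge0.
by rewrite g1; lra.
Qed.

End Calculus.

Section AngleDiscretization.
Variable R : realType.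

Lemma sum_odd_nat m :
  \sum_(1 <= j < m.+1) ((2 * j + 1)%:R : R) = (m.+1%:R) ^+ 2 - 1.
Proof.
elim: m => [|m IH]; first by rewrite big_geq // expr1n subrr.
by rewrite big_nat_recr //= IH -natr1 natrD natrM -natr1; ring.
Qed.

(* If [k t <= θ < (k + 1) t] then
   [θ^2 < (k + 1)^2 t^2 = t^2 (1 + Σ_{j=1}^k (2j + 1))]. *)
Lemma sqr_le_sum_odd_below (t th : R) n : 0 < t -> 0 <= th -> th < n.+1%:R * t ->
  th ^+ 2 <= t ^+ 2 * (1 + \sum_(1 <= j < n.+1 | j%:R * t <= th) (2 * j + 1)%:R).
Proof.
move=> t0 th0; elim: n => [|n IH] thn.
  by rewrite big_geq // addr0 mulr1; rewrite mul1r in thn; nra.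
rewrite big_mkcond big_nat_recr //= -big_mkcond /=.
have [thn1|tn_le] := ltP th (n.+1%:R * t).
  apply: le_trans (IH thn1) _; rewrite ler_wpM2l ?sqr_ge0 // lerD2l lerDl.
  by case: (_ <= th).
rewrite big_mkcond (eq_big_nat _ _ (F2 := fun j => (2 * j + 1)%:R)) => [|j /andP[_ jn]].
  rewrite sum_odd_nat (_ : 1 + _ = n.+2%:R ^+ 2); last first.
    by rewrite -natr1 natrD natrM -natr1; ring.
  have : 0 <= n.+2%:R * t :> R by rewrite mulr_ge0 ?ltW.
  by rewrite mulrC; nra.
by rewrite ifT // (le_trans _ tn_le) // ler_pM2r // ler_nat ltnW.
Qed.

Lemma exchange_weighted_sum (T : Type) (r : seq T) (r' : seq nat) (l : T -> R)
    (P : nat -> T -> bool) (W : nat -> R) :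
  \sum_(e <- r) l e * (1 + \sum_(j <- r' | P j e) W j)
  = \sum_(e <- r) l e + \sum_(j <- r') W j * \sum_(e <- r | P j e) l e.
Proof.
under eq_bigr do rewrite mulrDr mulr1.
rewrite big_split /=; congr (_ + _).
under eq_bigr do rewrite mulr_sumr big_mkcond /=.
rewrite exchange_big /=.
under [RHS]eq_bigr do rewrite mulr_sumr big_mkcond /=.
apply: eq_bigr => j _; apply: eq_bigr => e _.
by case: (P j e); rewrite ?mulr0 // mulrC.
Qed.

Lemma sum_odd_mul_le (f : nat -> R) (L de : R) n : 0 <= L -> 0 < de ->
    (forall j, (1 <= j <= n)%N -> f j <= L / (j%:R `^ (2 + de))) ->
  \sum_(1 <= j < n.+1) (2 * j + 1)%:R * f j <= 3 * L * (1 + de^-1).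
Proof.
move=> L0 de0 hf.
apply: (le_trans _ (ler_wpM2l (mulr_ge0 _ L0) (sum_inv_powR_le n de0))) => //.
rewrite mulr_sumr; apply: ler_sum_nat => j /andP[j1 jn].
have j0 : (0 : R) < j%:R by rewrite ltr0n.
set p := (j%:R : R) `^ (1 + de).
have p0 : 0 < p by rewrite powR_gt0.
have := hf j (introT andP (conj j1 jn)).
rewrite (_ : 2 + de = 1 + (1 + de)); last by ring.
rewrite powRD ?(gt_eqF j0) ?implybT // powRr1 ?ler0n // -/p => fj.
apply: (le_trans (ler_wpM2l _ fj)) => //.
rewrite invfM (_ : _ * (L * _) = (2 * j + 1)%:R / j%:R * (L / p)); last by ring.
rewrite [X in _ <= X](_ : _ = 3 * (L / p)); last by ring.
apply: ler_wpM2r; first by rewrite divr_ge0 // ltW.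
by rewrite ler_pdivrMr // -natrM ler_nat; lia.
Qed.

End AngleDiscretization.

Section Paths.
Variables (R : realType) (d : nat).
Implicit Types (a w : 'rV[R]_d) (s : seq 'rV[R]_d).

Lemma path_len_ge0 a s : 0 <= path_len a s.
Proof. by rewrite sumr_ge0 // => e _; apply: enorm_ge0. Qed.

Lemma sum_edges_dotp a s w :
  \sum_(e <- edges a s) dotp (e.2 - e.1) w = dotp (last a s - a) w.
Proof.
elim: s a => [|x s IH] a; first by rewrite big_nil subrr dotpC dotp0r.
by rewrite big_cons IH /= !dotpBl; ring.
Qed.

End Paths.

Section MonotonePath.
Variables (R : realType) (d : nat) (a b : 'rV[R]_d) (s : seq 'rV[R]_d).
Hypotheses (abP : monotone_path a b s) (ab : a != b).

Lemma sum_seglen_cos : \sum_(e <- edges a s) seglen e * cos (seg_angle (a, b) e)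
  = enorm (b - a).
Proof.
have D0 : 0 < enorm (b - a) by rewrite enorm_gt0 // subr_eq0 eq_sym.
apply: (mulfI (lt0r_neq0 D0)); rewrite -expr2 sqr_enorm mulr_sumr.
case: abP => <- /allP mono; rewrite -sum_edges_dotp big_seq [RHS]big_seq.
apply: eq_bigr => e /mono e_mono.
rewrite mulrA -[enorm _]/(seglen (a, last a s)) seglen_cos_seg_angle.
by rewrite dotpC ger0_norm.
Qed.

Lemma path_excess_le (t : R) n : 0 < t -> pi / 2 <= n%:R * t ->
  path_len a s - enorm (b - a) <= t ^+ 2 * (path_len a s +
    \sum_(1 <= j < n.+1) (2 * j + 1)%:R * F_len a b s (j%:R * t)).
Proof.
move=> t0 pin; rewrite -sum_seglen_cos -sumrB.
under eq_bigr do rewrite -{1}[seglen _]mulr1 -mulrBr.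
apply: (@le_trans _ _ (\sum_(e <- edges a s) seglen e * (t ^+ 2 *
    (1 + \sum_(1 <= j < n.+1 | j%:R * t <= seg_angle (a, b) e) (2 * j + 1)%:R)))).
  apply: ler_sum => e _; rewrite ler_wpM2l ?enorm_ge0 //.
  have th0 := seg_angle_ge0 (a, b) e.
  apply: (le_trans (one_sub_cos_le_sqr th0)); apply: sqr_le_sum_odd_below => //.
  apply: (le_lt_trans (seg_angle_le_pihalf _ _)); apply: (le_lt_trans pin).
  by rewrite ltr_pM2r // ltr_nat.
under eq_bigr do rewrite mulrCA.
by rewrite -mulr_sumr exchange_weighted_sum.
Qed.

End MonotonePath.

Theorem lemma3 (R : realType) (d : nat) (delta : R) (hdelta : 0 < delta) :
  exists kappa : R, 0 < kappa /\
    forall (eps : R) (a b : 'rV[R]_d) (s : seq 'rV[R]_d),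
      0 < eps -> eps < 1 -> a != b ->
      monotone_path a b s ->
      (forall i : nat, (1 <= i)%N ->
         (i%:Z <= Num.ceil ((pi / 2) / Num.sqrt (eps * kappa)))%R ->
         F_len a b s (i%:R * Num.sqrt (eps * kappa))
           <= path_len a s / powR (i%:R) (2 + delta)) ->
      path_len a s <= (1 + eps) * enorm (b - a).
Proof.
set C := 4 + 3 * delta^-1.
have C0 : 0 < C by rewrite addr_gt0 // mulr_gt0 // invr_gt0.
exists (2 * C)^-1; split; first by rewrite invr_gt0 mulr_gt0.
move=> eps a b s eps0 eps1 ab abP hF.
set t := Num.sqrt (eps * (2 * C)^-1) in hF.
have k0 : 0 < eps * (2 * C)^-1 by rewrite mulr_gt0 // invr_gt0 mulr_gt0.
have t0 : 0 < t by rewrite sqrtr_gt0.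
have tC : t ^+ 2 * C = eps / 2.
  by rewrite sqr_sqrtr ?ltW // invfM; field; rewrite gt_eqF.
have ceil0 : 0 <= Num.ceil ((pi / 2) / t :> R).
  by rewrite ceil_ge0 (lt_trans (ltrN10 _)) // !divr_gt0 ?pi_gt0.
set n := `|Num.ceil ((pi / 2) / t)|%N.
have pin : pi / 2 <= n%:R * t.
  by rewrite natr_absz ger0_norm // -ler_pdivrMr // ceil_ge.
have hsum : \sum_(1 <= j < n.+1) (2 * j + 1)%:R * F_len a b s (j%:R * t)
    <= 3 * path_len a s * (1 + delta^-1).
  apply: sum_odd_mul_le (path_len_ge0 a s) hdelta _ => j /andP[j1 jn].
  by apply: hF j1 _; rewrite -(gez0_abs ceil0) lez_nat.
have L0 := path_len_ge0 a s; set L := path_len a s in hsum L0 *.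
set D := enorm (b - a).
have excess : L - D <= eps / 2 * L.
  apply: (le_trans (path_excess_le abP ab t0 pin)).
  rewrite -/L -tC -[_ * C * L]mulrA ler_wpM2l ?sqr_ge0 //.
  by move: hsum; rewrite /C; nra.
(* [(1 + ε) (1 - ε/2) >= 1] for [ε <= 1] *)
have : 0 <= L * (eps * (1 - eps)) by apply: mulr_ge0 => //; nra.
by move: excess; nra.
Qed.
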